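(* Let $(X,d)$ be a complete metric space, $k\ge2$, $0<\rho<1$, $\mu:X^k\to X$ a nonexpansive, coordinatewise $\rho$-contractive $k$-mean, and $\le$ a closed partial order on $X$. Let $\mu_k=\mu$ and, for $n>k$, let $\mu_n$ be the iterated $\beta$-extensions. (1) If $\mu$ is monotone for $\le$, then $\mu_n$ is monotone for every $n\ge k$: $\mathbf{x}\le_n\mathbf{y}$ implies $\mu_n(\mathbf{x})\le\mu_n(\mathbf{y})$. (2) Let $\delta$ be another complete metric on $X$ and $\nu:X^k\to X$ a $k$-mean that is nonexpansive and coordinatewise $\rho$-contractive with respect to $\delta$, with iterated $\beta$-extensions $\nu_n$. Suppose $\le$ is closed in the product topology $(X,d)\times(X,\delta)$ and that $\mu$ or $\nu$ is monotone with respect to $\le$. If $\mu(\mathbf{x})\le\nu(\mathbf{x})$ for all $\mathbf{x}\in X^k$, then $\mu_n(\mathbf{x})\le\nu_n(\mathbf{x})$ for all $n\ge k$ and $\mathbf{x}\in X^n$.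
   Context: A $k$-mean is a map $\mu:X^k\to X$ with $\mu(x,\ldots,x)=x$. Nonexpansive: $d(\mu(\mathbf{x}),\mu(\mathbf{y}))\le\max_j d(x_j,y_j)$; coordinatewise $\rho$-contractive: $d(\mu(\mathbf{x}),\mu(\mathbf{y}))\le\rho\,d(x_j,y_j)$ when $\mathbf{x},\mathbf{y}$ differ only in coordinate $j$. $\le_n$ is the product order on $X^n$: $\mathbf{x}\le_n\mathbf{y}$ iff $x_i\le y_i$ for all $i$. A $k$-mean is monotone if $\mathbf{x}\le_k\mathbf{y}$ implies $\mu(\mathbf{x})\le\mu(\mathbf{y})$. A partial order is closed if its graph is closed in $X\times X$. Barycentric operator of a $k$-mean: $\beta(\mathbf{x})_j=\mu(x_1,\ldots,\widehat{x_j},\ldots,x_{k+1})$; $\mu_{n+1}$ is the unique continuous $(n+1)$-mean with $\beta_{\mu_n}^r(\mathbf{x})\to(\mu_{n+1}(\mathbf{x}),\ldots,\mu_{n+1}(\mathbf{x}))$ for all $\mathbf{x}$ (which exists under these hypotheses). *)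

From Stdlib Require Import Reals.
From mathcomp Require Import ssreflect ssrfun ssrbool eqtype ssrnat fintype.

Set Implicit Arguments.
Unset Strict Implicit.
Unset Printing Implicit Defensive.

Open Scope R_scope.

Section Defs.
Variable X : Type.

Definition is_metric (d : X -> X -> R) : Prop :=
  (forall x y, d x y = 0 <-> x = y) /\
  (forall x y, d x y = d y x) /\
  (forall x y z, d x z <= d x y + d y z).

Definition cvg_to (d : X -> X -> R) (u : nat -> X) (l : X) : Prop :=
  forall eps, 0 < eps -> exists N, forall n, (N <= n)%nat -> d (u n) l < eps.

Definition cauchy (d : X -> X -> R) (u : nat -> X) : Prop :=
  forall eps, 0 < eps -> exists N, forall m n, (N <= m)%nat -> (N <= n)%nat ->
    d (u m) (u n) < eps.

Definition complete_metric (d : X -> X -> R) : Prop :=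
  forall u, cauchy d u -> exists l, cvg_to d u l.

Definition is_mean (k : nat) (mu : ('I_k -> X) -> X) : Prop :=
  forall a, mu (fun _ => a) = a.

Definition nonexpansive (d : X -> X -> R) (k : nat) (mu : ('I_k -> X) -> X) : Prop :=
  forall (x y : 'I_k -> X) (c : R), (forall j, d (x j) (y j) <= c) ->
    d (mu x) (mu y) <= c.

Definition coord_contractive (d : X -> X -> R) (rho : R) (k : nat)
  (mu : ('I_k -> X) -> X) : Prop :=
  forall (x y : 'I_k -> X) (j : 'I_k), (forall i, i != j -> x i = y i) ->
    d (mu x) (mu y) <= rho * d (x j) (y j).

Definition partial_order (le : X -> X -> Prop) : Prop :=
  (forall x, le x x) /\ (forall x y, le x y -> le y x -> x = y) /\
  (forall x y z, le x y -> le y z -> le x z).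

(* the graph of le is closed in (X,d1) x (X,d2) (metric spaces: sequentially closed) *)
Definition closed_rel (d1 d2 : X -> X -> R) (le : X -> X -> Prop) : Prop :=
  forall (u v : nat -> X) (x y : X),
    cvg_to d1 u x -> cvg_to d2 v y -> (forall n, le (u n) (v n)) -> le x y.

Definition le_prod (le : X -> X -> Prop) (n : nat) (x y : 'I_n -> X) : Prop :=
  forall i, le (x i) (y i).

Definition monotone (le : X -> X -> Prop) (n : nat) (mu : ('I_n -> X) -> X) : Prop :=
  forall x y, le_prod le x y -> le (mu x) (mu y).

Definition beta (n : nat) (mu : ('I_n -> X) -> X) (x : 'I_n.+1 -> X) : 'I_n.+1 -> X :=
  fun j => mu (fun i : 'I_n => x (lift j i)).

Definition beta_extension (d : X -> X -> R) (n : nat) (mu : ('I_n -> X) -> X)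
  (mu' : ('I_n.+1 -> X) -> X) : Prop :=
  forall (x : 'I_n.+1 -> X) (j : 'I_n.+1),
    cvg_to d (fun r => iter r (beta mu) x j) (mu' x).

End Defs.

(* A relation between two means that is preserved coordinatewise passes to their
   barycentric operators, hence to every iterate; by closedness of the graph it
   survives the limit, so it holds between the beta-extensions.  Induction on n
   from k gives (1) for the pair (mu, mu), and (2) for the pair (mu, nu): there the
   base case comes from mu <= nu together with monotonicity of mu or nu.  No
   metric property is needed beyond the existence of the extensions. *)

From Stdlib Require Import Reals.
From mathcomp Require Import ssreflect ssrfun ssrbool eqtype ssrnat fintype.
Set Implicit Arguments.
Unset Strict Implicit.
Open Scope R_scope.

Section MonotonePair.
Variables (X : Type) (le : X -> X -> Prop).

(* [monotone le mu] is convertible to [monotone_pair mu mu]. *)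
Definition monotone_pair (n : nat) (f g : ('I_n -> X) -> X) : Prop :=
  forall a b, le_prod le a b -> le (f a) (g b).

Lemma monotone_pair_iter_beta (n : nat) (f g : ('I_n -> X) -> X) :
  monotone_pair f g -> forall r a b, le_prod le a b ->
  le_prod le (iter r (beta f) a) (iter r (beta g) b).
Proof. by move=> fg; elim=> [|r IH] a b ab //= j; apply: fg => i; apply: IH. Qed.

Lemma monotone_pair_beta_extension (d1 d2 : X -> X -> R) (n : nat)
    (f g : ('I_n -> X) -> X) (f' g' : ('I_n.+1 -> X) -> X) :
  closed_rel d1 d2 le -> beta_extension d1 f f' -> beta_extension d2 g g' ->
  monotone_pair f g -> monotone_pair f' g'.
Proof.
move=> le_closed ext_f ext_g fg a b ab.
apply: (le_closed (fun r => iter r (beta f) a ord0) (fun r => iter r (beta g) b ord0)).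
- exact: ext_f.
- exact: ext_g.
- by move=> r; apply: monotone_pair_iter_beta.
Qed.

Lemma monotone_pair_extensions (d1 d2 : X -> X -> R) (k : nat)
    (fs gs : forall n : nat, ('I_n -> X) -> X) :
  closed_rel d1 d2 le ->
  (forall n, (k <= n)%nat -> beta_extension d1 (fs n) (fs n.+1)) ->
  (forall n, (k <= n)%nat -> beta_extension d2 (gs n) (gs n.+1)) ->
  monotone_pair (fs k) (gs k) ->
  forall n, (k <= n)%nat -> monotone_pair (fs n) (gs n).
Proof.
move=> le_closed ext_f ext_g fg_k n /subnK <-.
elim: (n - k)%nat => [|m IH] //=.
have km : (k <= m + k)%nat by rewrite leq_addl.
exact: (monotone_pair_beta_extension le_closed (ext_f _ km) (ext_g _ km) IH).
Qed.

Lemma monotone_pair_of_le (n : nat) (f g : ('I_n -> X) -> X) :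
  (forall x y z, le x y -> le y z -> le x z) ->
  (forall x, le (f x) (g x)) -> monotone le f \/ monotone le g ->
  monotone_pair f g.
Proof.
move=> le_trans le_fg [f_mono | g_mono] a b ab.
- by apply: (le_trans _ (f b)); [exact: f_mono | exact: le_fg].
- by apply: (le_trans _ (g a)); [exact: le_fg | exact: g_mono].
Qed.

End MonotonePair.

Theorem theorem9p2 (X : Type) (d delta : X -> X -> R) (k : nat) (rho : R)
  (le : X -> X -> Prop) (mus nus : forall n : nat, ('I_n -> X) -> X) :
  is_metric d -> complete_metric d -> (2 <= k)%nat -> 0 < rho < 1 ->
  is_mean (mus k) -> nonexpansive d (mus k) -> coord_contractive d rho (mus k) ->
  partial_order le -> closed_rel d d le ->
  (forall n, (k <= n)%nat -> beta_extension d (mus n) (mus n.+1)) ->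
  (* (1) *)
  (monotone le (mus k) -> forall n, (k <= n)%nat -> monotone le (mus n)) /\
  (* (2) *)
  (is_metric delta -> complete_metric delta ->
   is_mean (nus k) -> nonexpansive delta (nus k) -> coord_contractive delta rho (nus k) ->
   (forall n, (k <= n)%nat -> beta_extension delta (nus n) (nus n.+1)) ->
   closed_rel d delta le ->
   (monotone le (mus k) \/ monotone le (nus k)) ->
   (forall x : 'I_k -> X, le (mus k x) (nus k x)) ->
   forall n, (k <= n)%nat -> forall x : 'I_n -> X, le (mus n x) (nus n x)).
Proof.
move=> _ _ _ _ _ _ _ [le_refl [_ le_trans]] le_closed ext_mu; split.
- move=> mu_mono; exact: (monotone_pair_extensions le_closed ext_mu ext_mu mu_mono).
- move=> _ _ _ _ _ ext_nu le_closed' mono le_mu_nu n kn x.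
  have mu_nu_k : monotone_pair le (mus k) (nus k) by exact: monotone_pair_of_le.
  apply: (monotone_pair_extensions le_closed' ext_mu ext_nu mu_nu_k kn) => i.
  exact: le_refl.
Qed.
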